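(* Let $q$ be a prime power, $1\le t\le s$, and $M$ an invertible $s\times s$ matrix over $\mathbb{F}_q$. If $\mathbf{y}=\mathbf{x}M^{-1}$ defines a linear $(t,t,s,q)$-AONT, then $\mathbf{y}=\mathbf{x}M$ defines a linear $(s-t,s-t,s,q)$-AONT.
   Context: For a bijection $\phi:\Gamma^s\to\Gamma^s$ over an alphabet $\Gamma$ of size $v$, its array representation is the $v^s\times 2s$ array having, for each $\mathbf{x}\in\Gamma^s$, a row $(\mathbf{x},\phi(\mathbf{x}))$. An $N\times k$ array is unbiased with respect to a set $D$ of columns if the rows restricted to $D$ contain every $|D|$-tuple over $\Gamma$ exactly $N/v^{|D|}$ times. For integers $0\le t_i\le t_o\le s$, $\phi$ is a $(t_i,t_o,s,v)$-AONT if its array representation (columns labelled $1,\dots,2s$) is unbiased with respect to $\{1,\dots,s\}$, $\{s+1,\dots,2s\}$, and $I\cup J$ for every $I\subseteq\{1,\dots,s\}$ with $|I|=t_i$ and every $J\subseteq\{s+1,\dots,2s\}$ with $|J|=s-t_o$. A map $\mathbf{x}\mapsto \mathbf{x}N$ on row vectors in $\mathbb{F}_q^s$ with $N$ invertible is a linear $(t_i,t_o,s,q)$-AONT if it is a $(t_i,t_o,s,q)$-AONT over $\Gamma=\mathbb{F}_q$. *)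

From mathcomp Require Import all_boot all_order all_algebra.
Set Implicit Arguments. Unset Strict Implicit. Unset Printing Implicit Defensive.
Import GRing.Theory.
Local Open Scope ring_scope.

(* An array with rows indexed by a finite type R and k columns over alphabet G
   (row r, column j has entry A r j) is unbiased w.r.t. a column set D if, for
   every |D|-tuple (given as the restriction to D of some g), the number of rows
   agreeing with it on D equals N / v^|D|, with N = #|R|, v = #|G|
   (stated multiplicatively: count * v^|D| = N). *)
Definition unbiased (G R : finType) (k : nat) (A : R -> 'I_k -> G)
  (D : {set 'I_k}) : Prop :=
  forall g : {ffun 'I_k -> G},
    (#|[set r | [forall j in D, A r j == g j]]| * #|G| ^ #|D| = #|R|)%N.

(* Array representation of phi : G^s -> G^s: the row for x is (x, phi x);
   columns 0..s-1 are x, columns s..2s-1 are phi x. *)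
Definition array_rep (G : finType) (s : nat) (phi : 'rV[G]_s -> 'rV[G]_s)
  (x : 'rV[G]_s) (j : 'I_(s + s)) : G :=
  match split j with
  | inl i => x ord0 i
  | inr i => phi x ord0 i
  end.

Definition AONT (G : finType) (ti tout s : nat) (phi : 'rV[G]_s -> 'rV[G]_s) : Prop :=
  [/\ (ti <= tout <= s)%N, bijective phi,
      unbiased (array_rep phi) (@lshift s s @: [set: 'I_s]),
      unbiased (array_rep phi) (@rshift s s @: [set: 'I_s]) &
      forall I J : {set 'I_s}, #|I| = ti -> #|J| = (s - tout)%N ->
        unbiased (array_rep phi) (@lshift s s @: I :|: @rshift s s @: J)].

Definition linear_AONT (F : finFieldType) (ti tout s : nat) (N : 'M[F]_s) : Prop :=
  N \in unitmx /\ AONT ti tout (fun x : 'rV[F]_s => x *m N).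
Arguments linear_AONT {F} ti tout s N.

From mathcomp Require Import all_boot all_order all_algebra.
From mathcomp Require Import fingroup perm.
Local Open Scope ring_scope.

(* If psi is the inverse of phi, the array of phi is the array of psi with
   rows relabelled by phi and the input and output halves of the columns
   exchanged.  Unbiasedness only depends on the multiset of rows and on which
   columns are inspected, so every set of t_i input and s - t_o output columns
   of psi becomes a set of s - t_o input and t_i output columns of phi: the
   inverse of a (t_i, t_o, s, v)-AONT is an (s - t_o, s - t_i, s, v)-AONT. *)

Lemma unbiased_reindex (G R : finType) (k : nat) (A B : R -> 'I_k -> G)
    (f : R -> R) (sigma : {perm 'I_k}) (D : {set 'I_k}) :
  injective f -> (forall r j, B r j = A (f r) (sigma j)) ->
  unbiased A (sigma @: D) -> unbiased B D.
Proof.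
move=> inj_f defB unbA g.
have := unbA [ffun j => g (sigma^-1%g j)].
rewrite (card_imset _ (@perm_inj _ sigma)) => <-; congr (_ * _)%N.
rewrite -[in RHS](card_preimset _ inj_f); apply: eq_card => r; rewrite !inE.
apply/forall_inP/forall_inP => [Br_g _ /imsetP[j Dj ->] | Af_g j Dj].
- by rewrite ffunE permK -defB Br_g.
- by have := Af_g _ (imset_f sigma Dj); rewrite ffunE permK -defB.
Qed.

Section SwapHalves.

Variable s : nat.

Definition swap_halves (j : 'I_(s + s)) : 'I_(s + s) :=
  match split j with inl i => rshift s i | inr i => lshift s i end.

Lemma swap_halves_lshift (i : 'I_s) : swap_halves (lshift s i) = rshift s i.
Proof. by rewrite /swap_halves (unsplitK (inl _ i)). Qed.

Lemma swap_halves_rshift (i : 'I_s) : swap_halves (rshift s i) = lshift s i.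
Proof. by rewrite /swap_halves (unsplitK (inr _ i)). Qed.

Lemma swap_halvesK : involutive swap_halves.
Proof.
move=> j; rewrite -(splitK j).
by case: (split j) => i /=; rewrite ?(swap_halves_lshift, swap_halves_rshift).
Qed.

Definition swap_halves_perm : {perm 'I_(s + s)} := perm (inv_inj swap_halvesK).

Lemma swap_halves_imsetU (I J : {set 'I_s}) :
  swap_halves_perm @: (@lshift s s @: I :|: @rshift s s @: J)
  = @lshift s s @: J :|: @rshift s s @: I.
Proof.
rewrite imsetU -!imset_comp setUC.
by congr (_ :|: _); apply: eq_imset => i /=;
  rewrite permE ?(swap_halves_lshift, swap_halves_rshift).
Qed.

End SwapHalves.

Lemma array_rep_lshift (G : finType) (s : nat) (phi : 'rV[G]_s -> 'rV[G]_s)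
    x (i : 'I_s) :
  array_rep phi x (lshift s i) = x ord0 i.
Proof. by rewrite /array_rep (unsplitK (inl _ i)). Qed.

Lemma array_rep_rshift (G : finType) (s : nat) (phi : 'rV[G]_s -> 'rV[G]_s)
    x (i : 'I_s) :
  array_rep phi x (rshift s i) = phi x ord0 i.
Proof. by rewrite /array_rep (unsplitK (inr _ i)). Qed.

Section InverseAONT.

Variables (G : finType) (s : nat) (phi psi : 'rV[G]_s -> 'rV[G]_s).
Hypotheses (phiK : cancel phi psi) (psiK : cancel psi phi).

Lemma array_rep_inverse x j :
  array_rep phi x j = array_rep psi (phi x) (swap_halves_perm s j).
Proof.
rewrite permE -(splitK j).
case: (split j) => i /=; rewrite ?(swap_halves_lshift, swap_halves_rshift).
- by rewrite array_rep_lshift array_rep_rshift phiK.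
- by rewrite array_rep_rshift array_rep_lshift.
Qed.

Lemma unbiased_inverse (I J : {set 'I_s}) :
  unbiased (array_rep psi) (@lshift s s @: I :|: @rshift s s @: J) ->
  unbiased (array_rep phi) (@lshift s s @: J :|: @rshift s s @: I).
Proof.
rewrite -swap_halves_imsetU.
exact: unbiased_reindex (can_inj phiK) array_rep_inverse.
Qed.

Lemma AONT_inverse (ti tout : nat) :
  AONT ti tout psi -> AONT (s - tout) (s - ti) phi.
Proof.
move=> [/andP[le_ti_tout le_tout_s] _ unb_in unb_out unb_IJ].
have le_ti_s := leq_trans le_ti_tout le_tout_s.
split.
- by rewrite leq_sub2l // leq_subr.
- exact: Bijective phiK psiK.
- move: (unbiased_inverse set0 setT).
  by rewrite !imset0 setU0 set0U => /(_ unb_out).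
- move: (unbiased_inverse setT set0).
  by rewrite !imset0 setU0 set0U => /(_ unb_in).
- move=> I J cardI cardJ; apply: unbiased_inverse; apply: unb_IJ => //.
  by rewrite cardJ subKn.
Qed.

End InverseAONT.

Theorem mainTheorem5 (F : finFieldType) (s t : nat) (M : 'M[F]_s) :
  (1 <= t)%N -> (t <= s)%N -> M \in unitmx ->
  linear_AONT t t s (invmx M) ->
  linear_AONT (s - t) (s - t) s M.
Proof.
move=> _ _ unitM [_ aont_invM]; split=> //.
exact: AONT_inverse (mulmxK unitM) (mulmxKV unitM) _ _ aont_invM.
Qed.
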